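(* Let $p\ge 2$ and let $\mathbb{F}_p$ be a binary floating-point format with unit roundoff $u=2^{-p}$. Let $t\ge1$ and $s_A,s_B\ge1$ be integers, and let $A\in\mathbb{F}_p^{m\times k}$, $B\in\mathbb{F}_p^{k\times n}$ have all entries nonzero. With the scale factors $\alpha,\beta$ and integer slices $A_{(\ell)}$, $B^{(h)}$ defined in the context, let $$C'=\alpha\beta^T\circ\sum_{\substack{1\le\ell\le s_A,\ 1\le h\le s_B\\ \ell+h\le\max(s_A,s_B)+1}}2^{-(\ell+h)t}A_{(\ell)}B^{(h)},$$ a sum of $\chi(s_A,s_B)=s_m(2s_M-s_m+1)/2$ matrices, where $s_M=\max(s_A,s_B)$, $s_m=\min(s_A,s_B)$. Suppose $\hat C'$ is computed by forming each such product $A_{(\ell)}B^{(h)}$ exactly, converting it exactly to $\mathbb{F}_p$ and scaling it exactly by $2^{-(\ell+h)t}$ and $\alpha\beta^T$, and adding the resulting $\psi=\chi(s_A,s_B)$ matrices entrywise in floating-point arithmetic (in any order) satisfying $\mathrm{fl}(x+y)=(x+y)(1+\delta)$, $|\delta|\le u$, with no overflow or underflow, and $\psi u<1$. Then, entrywise: if $s_A\le s_B$, $$|AB-\hat C'|\le\bigl(\zeta_{A,B}+2^{-s_Bt}s_A\kappa_A\kappa_B+\gamma_\psi(1+\zeta_{A,B}+2^{-s_Bt}s_A\kappa_A\kappa_B)\bigr)|A|\,|B|,$$ and if $s_A>s_B$, $$|AB-\hat C'|\le\bigl(\zeta_{A,B}+2^{-s_At}s_B\kappa_A\kappa_B+\gamma_\psi(1+\zeta_{A,B}+2^{-s_At}s_B\kappa_A\kappa_B)\bigr)|A|\,|B|,$$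 where $\zeta_{A,B}=2^{-s_At}\kappa_A+2^{-s_Bt}\kappa_B+2^{-(s_A+s_B)t}\kappa_A\kappa_B$ and $\gamma_j=ju/(1-ju)$.
   Context: Absolute values of matrices and inequalities between matrices are entrywise; $\circ$ is the Hadamard product. For $x\in\mathbb{R}$, $[x]$ denotes truncation toward zero. Scale factors: $\alpha_i$ is the smallest power of two strictly larger than $\max_{1\le j\le k}|a_{ij}|$, and $\beta_j$ is the smallest power of two strictly larger than $\max_{1\le i\le k}|b_{ij}|$. Slices: $A_{(\ell)}=\bigl[2^{\ell t}\bigl(\mathrm{diag}(\alpha)^{-1}A-\sum_{r=1}^{\ell-1}2^{-rt}A_{(r)}\bigr)\bigr]$ for $\ell=1,\dots,s_A$, and $B^{(h)}=\bigl[2^{ht}\bigl(B\,\mathrm{diag}(\beta)^{-1}-\sum_{r=1}^{h-1}2^{-rt}B^{(r)}\bigr)\bigr]$ for $h=1,\dots,s_B$, applied entrywise. Scaling measures: $\kappa_A=2\max_i\frac{\max_j|a_{ij}|}{\min_j|a_{ij}|}$ and $\kappa_B=2\max_j\frac{\max_i|b_{ij}|}{\min_i|b_{ij}|}$. *)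

From HB Require Import structures.
From mathcomp Require Import all_boot all_order all_algebra.
Set Implicit Arguments. Unset Strict Implicit. Unset Printing Implicit Defensive.
Import Order.TTheory GRing.Theory Num.Theory.
Local Open Scope ring_scope.

Section Defs.
Variable R : archiRealFieldType.

(* Binary floating-point format F_p with p-bit significand, unbounded
   exponent range (the theorem assumes no overflow/underflow). *)
Definition is_fp (p : nat) (x : R) : Prop :=
  exists (M e : int), x = M%:~R * (2 : R) ^ e /\ (absz M < 2 ^ p)%N.

Definition unit_roundoff (p : nat) : R := (2 : R) ^- p.

Definition gamma (u : R) (j : nat) : R := (j%:R * u) / (1 - j%:R * u).

Definition trunc0 (x : R) : R :=
  if 0 <= x then (Num.floor x)%:~R else - (Num.floor (- x))%:~R.

Definition smallest_pow2_above (x y : R) : Prop :=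
  [/\ exists e : int, y = (2 : R) ^ e,
      x < y &
      forall e : int, x < (2 : R) ^ e -> y <= (2 : R) ^ e].

(* slices x n = [:: x_(1); ...; x_(n)] where
   x_(l) = [ 2^(l t) (x - \sum_(r=1)^(l-1) 2^(-r t) x_(r)) ]  *)
Fixpoint slices (t : nat) (x : R) (n : nat) : seq R :=
  match n with
  | 0 => [::]
  | n'.+1 =>
      let s := slices t x n' in
      rcons s (trunc0 ((2 : R) ^+ (n'.+1 * t) *
                 (x - \sum_(r < n') (2 : R) ^- (r.+1 * t) * s`_r)))
  end.

Definition slice (t : nat) (x : R) (l : nat) : R := (slices t x l)`_(l.-1).

Definition Aslice m k (t : nat) (alpha : 'I_m -> R) (A : 'M[R]_(m, k)) (l : nat)
  : 'M[R]_(m, k) := \matrix_(i, j) slice t (A i j / alpha i) l.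

Definition Bslice k n (t : nat) (beta : 'I_n -> R) (B : 'M[R]_(k, n)) (h : nat)
  : 'M[R]_(k, n) := \matrix_(i, j) slice t (B i j / beta j) h.

Definition rowmax m k (A : 'M[R]_(m, k)) (i : 'I_m) : R :=
  \big[Num.max/0]_(j < k) `|A i j|.
(* minimum of |a_ij| over j (k >= 1); the default value rowmax is >= every
   entry, so it does not affect the minimum of a nonempty row *)
Definition rowmin m k (A : 'M[R]_(m, k)) (i : 'I_m) : R :=
  \big[Num.min/rowmax A i]_(j < k) `|A i j|.
Definition colmax k n (B : 'M[R]_(k, n)) (j : 'I_n) : R :=
  \big[Num.max/0]_(i < k) `|B i j|.
Definition colmin k n (B : 'M[R]_(k, n)) (j : 'I_n) : R :=
  \big[Num.min/colmax B j]_(i < k) `|B i j|.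

Definition kappaA m k (A : 'M[R]_(m, k)) : R :=
  2 * \big[Num.max/0]_(i < m) (rowmax A i / rowmin A i).
Definition kappaB k n (B : 'M[R]_(k, n)) : R :=
  2 * \big[Num.max/0]_(j < n) (colmax B j / colmin B j).

(* floating-point summation in any order: fl_sum p l s means that s can be
   obtained by adding the values in the list l (in any order and any
   parenthesization) where every addition satisfies
   fl(x+y) = (x+y)(1+d), |d| <= u = 2^-p, with result in F_p. *)
Inductive fl_sum (p : nat) : seq R -> R -> Prop :=
| fl_sum_leaf x : fl_sum p [:: x] x
| fl_sum_node l l1 l2 s1 s2 d :
    perm_eq l (l1 ++ l2) -> fl_sum p l1 s1 -> fl_sum p l2 s2 ->
    `|d| <= unit_roundoff p -> is_fp p ((s1 + s2) * (1 + d)) ->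
    fl_sum p l ((s1 + s2) * (1 + d)).

End Defs.

Definition slice_pairs (sA sB : nat) : seq (nat * nat) :=
  [seq lh <- [seq (l, h) | l <- iota 1 sA, h <- iota 1 sB]
     | (lh.1 + lh.2 <= maxn sA sB + 1)%N].

Definition chi (sA sB : nat) : nat :=
  ((minn sA sB) * (2 * maxn sA sB - minn sA sB + 1)) %/ 2.

(* With x = a_ik / alpha_i and y = b_kj / beta_j, the choice of the scale factors puts x
   and y in (-1, 1).  Truncation toward zero never overshoots, so the slices expand
   x = sum_(l <= N) 2^(-lt) x_(l) + r_N(x) with |x| = sum_(l <= N) 2^(-lt) |x_(l)| +
   |r_N(x)| and |r_N(x)| <= 2^(-Nt).  Against the kept products (l + h <= max(sA, sB) + 1), x y
   leaves the residual terms r_sA(x) y and (x - r_sA(x)) r_sB(y), at most 2^(-sA t)|y|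
   and 2^(-sB t)|x|, and, for at most min(sA, sB) values of l, a dropped tail of size at
   most 2^(-lt) 2^(-(max(sA, sB) - l)t).  Undoing the scaling costs kappa_A and kappa_B,
   since alpha_i <= kappa_A |a_ik| and beta_j <= kappa_B |b_kj|.  The floating-point
   sum of the psi terms adds gamma_psi times the sum of their absolute values, which is
   at most (|A| |B|)_ij; the stated bound is a weakening of the resulting one. *)

From Pilot Require Import Defs.
From HB Require Import structures.
From mathcomp Require Import all_boot all_order all_algebra.
From mathcomp Require Import zify ring lra.
Set Implicit Arguments. Unset Strict Implicit. Unset Printing Implicit Defensive.
Import Order.TTheory GRing.Theory Num.Theory.
Local Open Scope ring_scope.

Section Slices.
Variables (R : archiRealFieldType) (t : nat).
Implicit Types x y : R.

Definition weight (n : nat) : R := (2 : R) ^- (n * t).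

Lemma weight_gt0 n : 0 < weight n.
Proof. by rewrite invr_gt0 exprn_gt0. Qed.

Lemma weightD a b : weight (a + b) = weight a * weight b.
Proof. by rewrite /weight mulnDl exprD invfM. Qed.

Lemma weight0 : weight 0 = 1.
Proof. by rewrite /weight mul0n expr0 invr1. Qed.

Lemma trunc0_bounds y :
  `|y| = `|Defs.trunc0 y| + `|y - Defs.trunc0 y| /\ `|y - Defs.trunc0 y| <= 1.
Proof.
rewrite /Defs.trunc0; have [y_ge0 | y_lt0] := leP 0 y.
  have y_ge := floor_le y; have y_lt := floorD1_gt y; rewrite intrD in y_lt.
  have fl_ge0 : 0 <= (Num.floor y)%:~R :> R by rewrite ler0z floor_ge0.
  rewrite (ger0_norm y_ge0) (ger0_norm fl_ge0) ger0_norm ?subr_ge0 //.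
  by split; [ring | lra].
have y_ge := floor_le (- y); have y_lt := floorD1_gt (- y); rewrite intrD in y_lt.
have fl_ge0 : 0 <= (Num.floor (- y))%:~R :> R by rewrite ler0z floor_ge0 oppr_ge0 ltW.
rewrite (ltr0_norm y_lt0) normrN (ger0_norm fl_ge0) ler0_norm; last by lra.
by split; [ring | lra].
Qed.

Definition scaled_slice x l := weight l * slice t x l.

Definition residual x N := x - \sum_(r < N) scaled_slice x r.+1.

Lemma residual0 x : residual x 0 = x.
Proof. by rewrite /residual big_ord0 subr0. Qed.

Lemma residualS x N : residual x N.+1 = residual x N - scaled_slice x N.+1.
Proof. by rewrite /residual big_ord_recr /=; ring. Qed.

Lemma size_slices x N : size (slices t x N) = N.
Proof. by elim: N => //= N IH; rewrite size_rcons IH. Qed.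

Lemma nth_slices x N r : (r < N)%N -> (slices t x N)`_r = slice t x r.+1.
Proof.
elim: N => // N IH; rewrite ltnS leq_eqVlt => /orP[/eqP-> // | lt_rN].
by rewrite /= nth_rcons size_slices lt_rN IH.
Qed.

Lemma sliceS x N : slice t x N.+1 = Defs.trunc0 ((2 : R) ^+ (N.+1 * t) * residual x N).
Proof.
rewrite /slice /= nth_rcons size_slices ltnn eqxx /residual.
by congr (Defs.trunc0 (_ * (_ - _))); apply: eq_bigr => r _; rewrite nth_slices.
Qed.

Lemma sum_scaled_slices x N : \sum_(r < N) scaled_slice x r.+1 = x - residual x N.
Proof. by rewrite /residual opprB addrC subrK. Qed.

Lemma normr_residualS x N :
  `|residual x N| = `|scaled_slice x N.+1| + `|residual x N.+1| /\
  `|residual x N.+1| <= weight N.+1.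
Proof.
pose y := (2 : R) ^+ (N.+1 * t) * residual x N.
have w_gt0 := weight_gt0 N.+1.
have wK : weight N.+1 * (2 : R) ^+ (N.+1 * t) = 1.
  by rewrite mulVf // expf_neq0 // pnatr_eq0.
have res_y : residual x N = weight N.+1 * y by rewrite mulrA wK mul1r.
rewrite residualS /scaled_slice sliceS -/y res_y -mulrBr.
have [y_split y_trunc] := trunc0_bounds y; clearbody y.
rewrite !normrM (gtr0_norm w_gt0) y_split; split; first by ring.
by rewrite ler_piMr ?(ltW w_gt0).
Qed.

Lemma normr_residual_le x N : `|x| <= 1 -> `|residual x N| <= weight N.
Proof.
by case: N => [|N] x_le1; [rewrite residual0 weight0 | case: (normr_residualS x N)].
Qed.

Lemma normr_scaled_slice_le x l : `|x| <= 1 -> `|scaled_slice x l.+1| <= weight l.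
Proof.
move=> x_le1; apply: le_trans (normr_residual_le l x_le1).
by case: (normr_residualS x l) => -> _; rewrite lerDl.
Qed.

Lemma sum_normr_scaled_slice_from x a N :
  \sum_(r < N | (a <= r)%N) `|scaled_slice x r.+1| =
  `|residual x a| - `|residual x (maxn N a)|.
Proof.
elim: N => [|N IH]; first by rewrite big_ord0 max0n subrr.
rewrite big_mkcond big_ord_recr /= -big_mkcond IH.
case: leqP => [le_aN | lt_Na].
  rewrite !(maxn_idPl _) ?(leqW le_aN) //.
  by case: (normr_residualS x N) => -> _; ring.
by rewrite !(maxn_idPr _) ?addr0 // ltnW.
Qed.

Lemma sum_normr_scaled_slice_le x N :
  \sum_(r < N) `|scaled_slice x r.+1| <= `|x|.
Proof.
have := sum_normr_scaled_slice_from x 0 N.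
rewrite (eq_bigl xpredT) // residual0 maxn0 => ->.
by rewrite lerBlDr lerDl.
Qed.

End Slices.

Section SlicePairs.
Variables (T : Type) (idx : T) (op : Monoid.com_law idx).

Lemma big_iota1 n (G : nat -> T) :
  \big[op/idx]_(l <- iota 1 n) G l = \big[op/idx]_(l < n) G l.+1.
Proof.
rewrite -(big_mkord xpredT (fun l => G l.+1)) /index_iota subn0.
by rewrite -[1%N]/(1 + 0)%N iotaDl big_map.
Qed.

Lemma big_slice_pairs sA sB (F : nat * nat -> T) :
  \big[op/idx]_(lh <- slice_pairs sA sB) F lh =
  \big[op/idx]_(l < sA) \big[op/idx]_(h < sB | (l + h < maxn sA sB)%N)
     F (l.+1, h.+1).
Proof.
rewrite big_filter big_mkcond big_allpairs big_iota1.
apply: eq_bigr => l _; rewrite big_iota1 [RHS]big_mkcond.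
apply: eq_bigr => h _ /=.
by rewrite (_ : (l.+1 + h.+1 <= _)%N = (l + h < maxn sA sB)%N) //; lia.
Qed.

End SlicePairs.

Lemma size_slice_pairsC sA sB :
  size (slice_pairs sA sB) = size (slice_pairs sB sA).
Proof.
rewrite -!sum1_size !big_slice_pairs; under eq_bigr do rewrite big_mkcond.
rewrite exchange_big /= maxnC; apply: eq_bigr => h _.
by rewrite [RHS]big_mkcond; apply: eq_bigr => l _; rewrite addnC.
Qed.

Lemma sum_count_lt b c : (\sum_(h < b | (h < c)%N) 1 = minn b c)%N.
Proof.
elim: b => [|b IH]; first by rewrite big_ord0 min0n.
by rewrite big_mkcond big_ord_recr /= -big_mkcond IH; case: ltnP; lia.
Qed.

Lemma double_sum_subn n b : (n <= b)%N ->
  (2 * \sum_(l < n) (b - l) = n * (2 * b - n + 1))%N.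
Proof.
elim: n => [|n IH] le_nb; first by rewrite big_ord0.
rewrite big_ord_recr /= mulnDr IH 1?ltnW //.
have -> : (2 * b - n + 1 = b - n + b + 1)%N by lia.
have -> : (2 * b - n.+1 + 1 = b - n + b)%N by lia.
have : (n + (b - n) = b)%N by lia.
by move: (b - n)%N => d <-; nia.
Qed.

Lemma size_slice_pairs sA sB : size (slice_pairs sA sB) = chi sA sB.
Proof.
wlog le_AB : sA sB / (sA <= sB)%N.
  move=> wlog_le; case: (leqP sA sB) => [/wlog_le // | /ltnW/wlog_le].
  by rewrite size_slice_pairsC /chi minnC maxnC.
rewrite -sum1_size big_slice_pairs /chi (maxn_idPr le_AB) (minn_idPl le_AB).
have count_l (l : 'I_sA) : (\sum_(h < sB | l + h < sB) 1 = sB - l)%N.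
  rewrite (eq_bigl (fun h : 'I_sB => h < sB - l)%N) ?sum_count_lt => [|h]; lia.
by rewrite (eq_bigr _ (fun l _ => count_l l)) -double_sum_subn ?mulKn.
Qed.

Lemma sum_if_lt_le (R : numDomainType) n M b (c : R) : 0 <= c ->
  \sum_(l < n) (if (M - l < b)%N then c else 0) <= (n - (M - b))%:R * c.
Proof.
move=> c_ge0; elim: n => [|n IH]; first by rewrite big_ord0 sub0n mul0r.
rewrite big_ord_recr /=; case: ltnP => [lt_b | ge_b].
  have -> : (n.+1 - (M - b) = n - (M - b) + 1)%N by lia.
  by rewrite natrD mulrDl mul1r lerD2r.
by rewrite addr0 (le_trans IH) // ler_wpM2r // ler_nat; lia.
Qed.

Section SlicedProduct.
Variables (R : archiRealFieldType) (t : nat).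
Implicit Types x y : R.
Local Notation weight := (weight R t).
Local Notation scaled_slice := (scaled_slice t).
Local Notation residual := (residual t).

Definition sliced_product sA sB x y :=
  \sum_(lh <- slice_pairs sA sB) scaled_slice x lh.1 * scaled_slice y lh.2.

Lemma normr_dropped_le x y sA sB : `|x| <= 1 -> `|y| <= 1 ->
  `|\sum_(l < sA) scaled_slice x l.+1 *
      \sum_(h < sB | ~~ (l + h < maxn sA sB)%N) scaled_slice y h.+1|
  <= weight (maxn sA sB) * (minn sA sB)%:R.
Proof.
move=> x_le1 y_le1; set M := maxn sA sB.
have term_le (l : 'I_sA) :
    `|scaled_slice x l.+1 * \sum_(h < sB | ~~ (l + h < M)%N) scaled_slice y h.+1|
    <= (if (M - l < sB)%N then weight M else 0).
  rewrite normrM (eq_bigl (fun h : 'I_sB => M - l <= h)%N) => [|h]; last by lia.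
  have tail_le : `|\sum_(h < sB | (M - l <= h)%N) scaled_slice y h.+1|
      <= `|residual y (M - l)| - `|residual y (maxn sB (M - l))|.
    by rewrite -sum_normr_scaled_slice_from ler_norm_sum.
  have x_l_le := normr_scaled_slice_le t l x_le1.
  case: ltnP => [lt_sB | ge_sB].
    rewrite (maxn_idPl (ltnW lt_sB)) in tail_le.
    have l_le_M : (l <= M)%N by rewrite /M; have := ltn_ord l; lia.
    have -> : weight M = weight l * weight (M - l) by rewrite -weightD subnKC.
    rewrite ler_pM // (le_trans tail_le) //.
    have := normr_residual_le t (M - l) y_le1.
    by have := normr_ge0 (residual y sB); lra.
  rewrite (maxn_idPr ge_sB) subrr in tail_le.
  by rewrite mulr_ge0_le0.
apply: le_trans (ler_norm_sum _ _ _) _.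
apply: le_trans (ler_sum _ (fun l _ => term_le l)) _.
rewrite mulrC (_ : minn sA sB = sA - (M - sB))%N; last by rewrite /M; lia.
exact/sum_if_lt_le/ltW/weight_gt0.
Qed.

Lemma sliced_product_err x y sA sB : `|x| <= 1 -> `|y| <= 1 ->
  `|x * y - sliced_product sA sB x y|
  <= weight sA * `|y| + weight sB * `|x| + weight (maxn sA sB) * (minn sA sB)%:R.
Proof.
move=> x_le1 y_le1; set M := maxn sA sB.
pose D := \sum_(l < sA)
  scaled_slice x l.+1 * \sum_(h < sB | ~~ (l + h < M)%N) scaled_slice y h.+1.
have kept_eq : sliced_product sA sB x y = (x - residual x sA) * (y - residual y sB) - D.
  rewrite /sliced_product big_slice_pairs -!sum_scaled_slices mulr_suml -sumrB.
  apply: eq_bigr => l _.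
  rewrite -mulrBr [X in _ * (X - _)](bigID (fun h : 'I_sB => l + h < M)%N) /=.
  by rewrite addrK mulr_sumr.
have -> : x * y - sliced_product sA sB x y =
    residual x sA * y + (x - residual x sA) * residual y sB + D.
  by rewrite kept_eq; ring.
have x_partial_le : `|x - residual x sA| <= `|x|.
  rewrite -sum_scaled_slices (le_trans (ler_norm_sum _ _ _)) //.
  exact: sum_normr_scaled_slice_le.
apply: (le_trans (ler_normD _ _)); rewrite lerD ?normr_dropped_le //.
apply: (le_trans (ler_normD _ _)); rewrite lerD // normrM.
- by rewrite ler_wpM2r // normr_residual_le.
- by rewrite mulrC ler_pM // normr_residual_le.
Qed.

Lemma sum_normr_sliced_product_le x y sA sB :
  \sum_(lh <- slice_pairs sA sB) `|scaled_slice x lh.1 * scaled_slice y lh.2|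
  <= `|x| * `|y|.
Proof.
rewrite big_slice_pairs; apply: le_trans (_ : _ <= \sum_(l < sA) \sum_(h < sB)
  `|scaled_slice x l.+1| * `|scaled_slice y h.+1|) _.
  apply: ler_sum => l _; rewrite [X in _ <= X](bigID (fun h : 'I_sB => l + h < maxn sA sB)%N) /=.
  by under eq_bigr do rewrite normrM; rewrite lerDl sumr_ge0 // => h _; rewrite mulr_ge0.
by rewrite -big_distrlr ler_pM ?sumr_ge0 ?sum_normr_scaled_slice_le.
Qed.

End SlicedProduct.

Lemma expr_pred_addn_le (R : realDomainType) (c : R) a b : 1 <= c -> (0 < a)%N -> (0 < b)%N ->
  c * c ^+ a.-1 <= c ^+ (a + b).-1.
Proof. by move=> c_ge1 a_gt0 b_gt0; rewrite -exprS ler_weXn2l //; lia. Qed.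

Lemma rounded_add_err (R : realFieldType) (u s1 s2 S1 S2 T1 T2 a1 a2 G d : R) :
  `|d| <= u -> `|S1| <= T1 -> `|S2| <= T2 ->
  `|s1 - S1| <= (a1 - 1) * T1 -> `|s2 - S2| <= (a2 - 1) * T2 ->
  (1 + u) * a1 <= G -> (1 + u) * a2 <= G ->
  `|(s1 + s2) * (1 + d) - (S1 + S2)| <= (G - 1) * (T1 + T2).
Proof.
move=> d_le S1_le S2_le err1 err2 a1_le a2_le.
have s_le (s S T a : R) : `|S| <= T -> `|s - S| <= (a - 1) * T -> `|s| <= a * T.
  move=> S_le err; have := ler_normD (s - S) S; rewrite subrK; lra.
have T1_ge0 := le_trans (normr_ge0 _) S1_le; have T2_ge0 := le_trans (normr_ge0 _) S2_le.
have rnd_le : `|d * (s1 + s2)| <= u * (a1 * T1 + a2 * T2).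
  rewrite normrM ler_pM // (le_trans (ler_normD _ _)) //.
  by apply: lerD; [exact: (s_le _ S1) | exact: (s_le _ S2)].
have -> : (s1 + s2) * (1 + d) - (S1 + S2) = (s1 - S1) + (s2 - S2) + d * (s1 + s2).
  by ring.
have := ler_normD (s1 - S1 + (s2 - S2)) (d * (s1 + s2)).
have := ler_normD (s1 - S1) (s2 - S2).
nra.
Qed.

Section FloatingPointSum.
Variables (R : archiRealFieldType) (p : nat).
Local Notation u := (unit_roundoff R p).

Lemma unit_roundoff_ge0 : 0 <= u.
Proof. by rewrite invr_ge0 exprn_ge0. Qed.

Lemma fl_sum_size_gt0 (l : seq R) s : fl_sum p l s -> (0 < size l)%N.
Proof.
by elim=> // {}l l1 l2 s1 s2 d /perm_size-> _ size1_gt0 *; rewrite size_cat addn_gt0 size1_gt0.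
Qed.

Lemma fl_sum_err (l : seq R) s : fl_sum p l s ->
  `|s - \sum_(x <- l) x| <= ((1 + u) ^+ (size l).-1 - 1) * \sum_(x <- l) `|x|.
Proof.
elim=> [x | {}l l1 l2 s1 s2 d perm_l f1 err1 f2 err2 d_le _].
  by rewrite big_seq1 subrr normr0 expr0 subrr mul0r.
have u1_ge1 : 1 <= 1 + u by rewrite lerDl unit_roundoff_ge0.
have [n1_gt0 n2_gt0] := (fl_sum_size_gt0 f1, fl_sum_size_gt0 f2).
rewrite (perm_size perm_l) size_cat !(perm_big _ perm_l) !big_cat /=.
apply: (rounded_add_err d_le (ler_norm_sum _ _ _) (ler_norm_sum _ _ _) err1 err2).
- exact: expr_pred_addn_le.
- by rewrite addnC expr_pred_addn_le.
Qed.

Lemma expr_sub1_le_gamma j : j%:R * u < 1 -> (1 + u) ^+ j - 1 <= gamma u j.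
Proof.
move=> ju_lt1; have u_ge0 := unit_roundoff_ge0.
have bernoulli_inv i : (1 + u) ^+ i * (1 - i%:R * u) <= 1.
  elim: i => [|i IH]; first by rewrite expr0 mul0r subr0 mulr1.
  have pow_ge0 : 0 <= (1 + u) ^+ i by rewrite exprn_ge0 // addr_ge0.
  have step : (1 + u) * (1 - i.+1%:R * u) <= 1 - i%:R * u.
    by rewrite -natr1; have := ler0n R i; nra.
  by rewrite exprSr -mulrA (le_trans _ IH) // ler_wpM2l.
have := bernoulli_inv j.
by rewrite /gamma ler_pdivlMr ?subr_gt0 //; nra.
Qed.

Lemma gamma_ge0 j : j%:R * u < 1 -> 0 <= gamma u j.
Proof. by move=> ju_lt1; rewrite divr_ge0 ?mulr_ge0 ?unit_roundoff_ge0 // subr_ge0 ltW. Qed.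

Lemma fl_sum_err_gamma (l : seq R) s : fl_sum p l s -> (size l)%:R * u < 1 ->
  `|s - \sum_(x <- l) x| <= gamma u (size l) * \sum_(x <- l) `|x|.
Proof.
move=> fl_ls size_lt; apply: le_trans (fl_sum_err fl_ls) _.
rewrite ler_wpM2r ?sumr_ge0 // (le_trans _ (expr_sub1_le_gamma size_lt)) //.
by rewrite lerD2r ler_weXn2l ?leq_pred // lerDl unit_roundoff_ge0.
Qed.

End FloatingPointSum.

Section ScaleFactors.
Variable R : archiRealFieldType.

Lemma smallest_pow2_above_le (r a : R) : 0 < r -> smallest_pow2_above r a ->
  r < a /\ a <= 2 * r.
Proof.
move=> r_gt0 [[e ->] r_lt min_pow]; split => //.
rewrite leNgt; apply/negP => half_gt.
have half : (2 : R) ^ (e - 1) = (2 : R) ^ e / 2 by rewrite expfzDr ?pnatr_eq0 // exprN1.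
have := min_pow (e - 1); rewrite half; lra.
Qed.

Lemma scale_factor_bounds k (f : 'I_k -> R) a j : (forall j, f j != 0) ->
  let mx := \big[Num.max/0]_(i < k) `|f i| in
  let mn := \big[Num.min/mx]_(i < k) `|f i| in
  smallest_pow2_above mx a -> `|f j| < a /\ a <= 2 * (mx / mn) * `|f j|.
Proof.
move=> f_neq0 mx mn pow2_a.
have fj_gt0 : 0 < `|f j| by rewrite normr_gt0.
have fj_le : `|f j| <= mx by apply: le_bigmax.
have mn_le : mn <= `|f j| by apply: bigmin_le.
have mn_gt0 : 0 < mn.
  apply: (big_ind (fun v => 0 < v)) => [|v w v_gt0 w_gt0|i _].
  - exact: lt_le_trans fj_le.
  - by rewrite lt_min v_gt0.
  - by rewrite normr_gt0.
have [mx_lt a_le] := smallest_pow2_above_le (lt_le_trans fj_gt0 fj_le) pow2_a.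
split; first exact: le_lt_trans mx_lt.
have mx_ge0 : 0 <= mx by apply: bigmax_ge_id.
rewrite (le_trans a_le) // -mulrA ler_wpM2l // [X in X <= _](_ : mx = mx / mn * mn).
  by rewrite ler_wpM2l // divr_ge0 // ltW.
by rewrite divfK // gt_eqF.
Qed.

Lemma kappaA_ge0 m k (A : 'M[R]_(m, k)) : 0 <= kappaA A.
Proof. by rewrite mulr_ge0 // bigmax_ge_id. Qed.

Lemma kappaB_ge0 k n (B : 'M[R]_(k, n)) : 0 <= kappaB B.
Proof. by rewrite mulr_ge0 // bigmax_ge_id. Qed.

Lemma row_scale_bounds m k (A : 'M[R]_(m, k)) i a j :
  (forall j, A i j != 0) -> smallest_pow2_above (rowmax A i) a ->
  `|A i j| < a /\ a <= kappaA A * `|A i j|.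
Proof.
move=> nz_row pow2_a; have [lt_a a_le] := scale_factor_bounds j nz_row pow2_a.
split=> //; rewrite (le_trans a_le) // ler_wpM2r // /kappaA ler_wpM2l //.
exact: (le_bigmax 0 (fun i => rowmax A i / rowmin A i) i).
Qed.

Lemma col_scale_bounds k n (B : 'M[R]_(k, n)) i b j :
  (forall i, B i j != 0) -> smallest_pow2_above (colmax B j) b ->
  `|B i j| < b /\ b <= kappaB B * `|B i j|.
Proof.
move=> nz_col pow2_b.
have [lt_b b_le] := scale_factor_bounds (f := fun i => B i j) i nz_col pow2_b.
split=> //; rewrite (le_trans b_le) // ler_wpM2r // /kappaB ler_wpM2l //.
exact: (le_bigmax 0 (fun j => colmax B j / colmin B j) j).
Qed.

End ScaleFactors.

Lemma scaled_err_le (R : realFieldType) (a b al be kA kB c1 c2 c3 : R) :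
  `|a| < al -> al <= kA * `|a| -> `|b| < be -> be <= kB * `|b| ->
  0 <= c1 -> 0 <= c2 -> 0 <= c3 ->
  al * be * (c1 * `|b / be| + c2 * `|a / al| + c3)
  <= (c1 * kA + c2 * kB + c3 * kA * kB) * (`|a| * `|b|).
Proof.
move=> a_lt al_le b_lt be_le c1_ge0 c2_ge0 c3_ge0.
have al_gt0 := le_lt_trans (normr_ge0 a) a_lt.
have be_gt0 := le_lt_trans (normr_ge0 b) b_lt.
rewrite !normrM !normfV (gtr0_norm al_gt0) (gtr0_norm be_gt0).
have -> : al * be * (c1 * (`|b| / be) + c2 * (`|a| / al) + c3) =
          c1 * (al * `|b|) + c2 * (be * `|a|) + c3 * (al * be).
  by field; rewrite !gt_eqF.
have := ler_wpM2l c1_ge0 (ler_wpM2r (normr_ge0 b) al_le).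
have := ler_wpM2l c2_ge0 (ler_wpM2r (normr_ge0 a) be_le).
have := ler_wpM2l c3_ge0 (ler_pM (ltW al_gt0) (ltW be_gt0) al_le be_le).
rewrite !mulrA; nra.
Qed.

Lemma mulmx_norm_entry (R : numDomainType) m k n (A : 'M[R]_(m, k)) (B : 'M[R]_(k, n)) i j :
  (map_mx Num.norm A *m map_mx Num.norm B) i j = \sum_kk `|A i kk| * `|B kk j|.
Proof. by rewrite mxE; apply: eq_bigr => kk _; rewrite !mxE. Qed.

Lemma mulmx_norm_entry_ge0 (R : numDomainType) m k n (A : 'M[R]_(m, k)) (B : 'M[R]_(k, n)) i j :
  0 <= (map_mx Num.norm A *m map_mx Num.norm B) i j.
Proof. by rewrite mulmx_norm_entry sumr_ge0 // => kk _; rewrite mulr_ge0. Qed.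

Section EntryError.
Variables (R : archiRealFieldType) (t sA sB m k n : nat).
Variables (A : 'M[R]_(m, k)) (B : 'M[R]_(k, n)).
Variables (alpha : 'I_m -> R) (beta : 'I_n -> R) (i : 'I_m) (j : 'I_n).
Hypothesis A_bounds : forall kk, `|A i kk| < alpha i /\ alpha i <= kappaA A * `|A i kk|.
Hypothesis B_bounds : forall kk, `|B kk j| < beta j /\ beta j <= kappaB B * `|B kk j|.

Local Notation x kk := (A i kk / alpha i).
Local Notation y kk := (B kk j / beta j).
Local Notation slice_terms := [seq alpha i * beta j *
  ((2 : R) ^- ((lh.1 + lh.2) * t) * (Aslice t alpha A lh.1 *m Bslice t beta B lh.2) i j)
  | lh <- slice_pairs sA sB].

Lemma slice_term_eq l h :
  alpha i * beta j * ((2 : R) ^- ((l + h) * t) * (Aslice t alpha A l *m Bslice t beta B h) i j)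
  = \sum_kk alpha i * beta j * (scaled_slice t (x kk) l * scaled_slice t (y kk) h).
Proof.
rewrite mxE !mulr_sumr; apply: eq_bigr => kk _.
by rewrite !mxE -[(2 : R) ^- _]/(weight R t (l + h)) weightD /scaled_slice; ring.
Qed.

Lemma sum_slice_terms :
  \sum_(z <- slice_terms) z = \sum_kk alpha i * beta j * sliced_product t sA sB (x kk) (y kk).
Proof.
rewrite big_map; under eq_bigr do rewrite slice_term_eq.
by rewrite exchange_big; apply: eq_bigr => kk _; rewrite mulr_sumr.
Qed.

Lemma sum_normr_slice_terms_le :
  \sum_(z <- slice_terms) `|z| <= (map_mx Num.norm A *m map_mx Num.norm B) i j.
Proof.
rewrite big_map; under eq_bigr do rewrite slice_term_eq.
apply: le_trans (ler_sum _ (fun lh _ => ler_norm_sum _ _ _)) _.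
rewrite exchange_big mulmx_norm_entry; apply: ler_sum => kk _.
have [[a_lt _] [b_lt _]] := (A_bounds kk, B_bounds kk).
have [al_gt0 be_gt0] := (le_lt_trans (normr_ge0 _) a_lt, le_lt_trans (normr_ge0 _) b_lt).
under eq_bigr do rewrite normrM (ger0_norm (mulr_ge0 (ltW al_gt0) (ltW be_gt0))).
rewrite -mulr_sumr; apply: le_trans (ler_wpM2l (mulr_ge0 (ltW al_gt0) (ltW be_gt0))
  (sum_normr_sliced_product_le _ _ _ _ _)) _.
rewrite !normrM !normfV (gtr0_norm al_gt0) (gtr0_norm be_gt0).
by rewrite le_eqVlt; apply/orP; left; apply/eqP; field; rewrite !gt_eqF.
Qed.

Lemma slice_terms_err :
  `|(A *m B) i j - \sum_(z <- slice_terms) z| <=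
  (weight R t sA * kappaA A + weight R t sB * kappaB B
   + weight R t (maxn sA sB) * (minn sA sB)%:R * kappaA A * kappaB B)
  * (map_mx Num.norm A *m map_mx Num.norm B) i j.
Proof.
rewrite sum_slice_terms mulmx_norm_entry mulr_sumr mxE -sumrB.
apply: le_trans (ler_norm_sum _ _ _) _; apply: ler_sum => kk _.
have [[a_lt al_le] [b_lt be_le]] := (A_bounds kk, B_bounds kk).
have [al_gt0 be_gt0] := (le_lt_trans (normr_ge0 _) a_lt, le_lt_trans (normr_ge0 _) b_lt).
have unit_le (a s : R) : 0 < s -> `|a| < s -> `|a / s| <= 1.
  by move=> s_gt0 lt_s; rewrite normrM normfV (gtr0_norm s_gt0) ler_pdivrMr // mul1r ltW.
have -> : A i kk * B kk j = alpha i * beta j * (x kk * y kk) by field; rewrite !gt_eqF.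
rewrite -mulrBr normrM (ger0_norm (mulr_ge0 (ltW al_gt0) (ltW be_gt0))).
apply: le_trans (ler_wpM2l (mulr_ge0 (ltW al_gt0) (ltW be_gt0))
  (sliced_product_err _ _ _ (unit_le _ _ al_gt0 a_lt) (unit_le _ _ be_gt0 b_lt))) _.
by apply: scaled_err_le; rewrite ?mulr_ge0 ?ler0n // ltW // weight_gt0.
Qed.

Lemma fl_slice_terms_err p c : fl_sum p slice_terms c ->
  (chi sA sB)%:R * unit_roundoff R p < 1 ->
  `|(A *m B) i j - c| <=
  (weight R t sA * kappaA A + weight R t sB * kappaB B
   + weight R t (maxn sA sB) * (minn sA sB)%:R * kappaA A * kappaB B
   + gamma (unit_roundoff R p) (chi sA sB))
  * (map_mx Num.norm A *m map_mx Num.norm B) i j.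
Proof.
move=> fl_c chi_u_lt1; have := fl_sum_err_gamma fl_c.
rewrite size_map size_slice_pairs => /(_ chi_u_lt1) fl_err.
set S := \sum_(z <- _) z in fl_err.
rewrite mulrDl (le_trans (ler_distD S _ _)) // lerD ?slice_terms_err //.
by rewrite distrC (le_trans fl_err) // ler_wpM2l ?gamma_ge0 // sum_normr_slice_terms_le.
Qed.

End EntryError.

Lemma error_bound_weaken (R : realFieldType) (e z c g N : R) :
  0 <= g -> 0 <= e -> e <= z -> 0 <= c -> 0 <= N ->
  (e + c + g) * N <= (z + c + g * (1 + z + c)) * N.
Proof.
move=> g_ge0 e_ge0 e_le_z c_ge0 N_ge0; rewrite ler_wpM2r //.
have := mulr_ge0 g_ge0 (addr_ge0 (le_trans e_ge0 e_le_z) c_ge0); nra.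
Qed.

Unset Implicit Arguments.

Theorem mainTheorem2 (R : archiRealFieldType) (p t sA sB m k n : nat)
  (A : 'M[R]_(m, k)) (B : 'M[R]_(k, n))
  (alpha : 'I_m -> R) (beta : 'I_n -> R) (Chat : 'M[R]_(m, n)) :
  (2 <= p)%N -> (1 <= t)%N -> (1 <= sA)%N -> (1 <= sB)%N ->
  (forall i j, is_fp p (A i j)) -> (forall i j, is_fp p (B i j)) ->
  (forall i j, A i j != 0) -> (forall i j, B i j != 0) ->
  (forall i, smallest_pow2_above (rowmax A i) (alpha i)) ->
  (forall j, smallest_pow2_above (colmax B j) (beta j)) ->
  (* each product A_(l) B^(h) is converted exactly to F_p *)
  (forall l h, (l, h) \in slice_pairs sA sB ->
     forall i j, is_fp p ((Aslice t alpha A l *m Bslice t beta B h) i j)) ->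
  (chi sA sB)%:R * unit_roundoff R p < 1 ->
  (forall i j, fl_sum p
     [seq alpha i * beta j *
          ((2 : R) ^- ((lh.1 + lh.2) * t) *
           (Aslice t alpha A lh.1 *m Bslice t beta B lh.2) i j)
     | lh <- slice_pairs sA sB]
     (Chat i j)) ->
  let u := unit_roundoff R p in
  let psi := chi sA sB in
  let kA := kappaA A in
  let kB := kappaB B in
  let zeta := (2 : R) ^- (sA * t) * kA + (2 : R) ^- (sB * t) * kB
              + (2 : R) ^- ((sA + sB) * t) * kA * kB in
  ((sA <= sB)%N ->
     forall i j, `|(A *m B) i j - Chat i j| <=
       (zeta + (2 : R) ^- (sB * t) * sA%:R * kA * kB
        + gamma u psi * (1 + zeta + (2 : R) ^- (sB * t) * sA%:R * kA * kB))
       * (map_mx Num.norm A *m map_mx Num.norm B) i j) /\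
  ((sB < sA)%N ->
     forall i j, `|(A *m B) i j - Chat i j| <=
       (zeta + (2 : R) ^- (sA * t) * sB%:R * kA * kB
        + gamma u psi * (1 + zeta + (2 : R) ^- (sA * t) * sB%:R * kA * kB))
       * (map_mx Num.norm A *m map_mx Num.norm B) i j).
Proof.
move=> _ _ _ _ _ _ nzA nzB pow2_alpha pow2_beta _ psi_u_lt1 fl_Chat u psi kA kB zeta.
have entry_le i j := fl_slice_terms_err (fun kk => row_scale_bounds kk (nzA i) (pow2_alpha i))
  (fun kk => col_scale_bounds kk (fun i0 => nzB i0 j) (pow2_beta j)) (fl_Chat i j) psi_u_lt1.
have gamma_psi_ge0 : 0 <= gamma u psi := gamma_ge0 psi_u_lt1.
have [kA_ge0 kB_ge0] : 0 <= kA /\ 0 <= kB by split; [apply: kappaA_ge0 | apply: kappaB_ge0].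
have w_ge0 q : 0 <= weight R t q by exact/ltW/weight_gt0.
have kAkB_ge0 q N : 0 <= weight R t q * N%:R * kA * kB.
  by rewrite mulr_ge0 // mulr_ge0 // mulr_ge0.
have zeta_ge : weight R t sA * kA + weight R t sB * kB <= zeta.
  rewrite -[zeta]/(weight R t sA * kA + weight R t sB * kB + weight R t (sA + sB) * kA * kB).
  by rewrite lerDl (mulr_ge0 (mulr_ge0 (w_ge0 _) kA_ge0) kB_ge0).
have e_ge0 : 0 <= weight R t sA * kA + weight R t sB * kB.
  by rewrite addr_ge0 // mulr_ge0.
have weaken := error_bound_weaken gamma_psi_ge0 e_ge0 zeta_ge (kAkB_ge0 _ _)
  (mulmx_norm_entry_ge0 A B _ _).
split=> [le_AB | lt_BA] i j; apply: le_trans (entry_le i j) _.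
- by rewrite (maxn_idPr le_AB) (minn_idPl le_AB) weaken.
- by rewrite (maxn_idPl (ltnW lt_BA)) (minn_idPr (ltnW lt_BA)) weaken.
Qed.
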